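(* Let $H$ be a crossed group-cograded weak Hopf quasigroup over $G$ with bijective antipode and crossing $(\pi_q)_{q\in G}$, let $p,q\in G$ and $(V,\rho^V)\in\mathcal{YDWQ}(H)_p$. Let ${}^qV$ be the vector space $V$, whose element corresponding to $v\in V$ is written ${}^qv$, with structures ${}^qv\cdot h={}^q\big(v\cdot\pi_{q^{-1}}(h)\big)$ for $h\in H_{qpq^{-1}}$, and $\rho_r^{{}^qV}({}^qv)={}^q(v_{(0)})\otimes\pi_q(v_{(1,q^{-1}rq)})$ for $r\in G$. Then ${}^qV\in\mathcal{YDWQ}(H)_{qpq^{-1}}$.
   Context: Let $k$ be a field and $G$ a group with identity $e$. A group-cograded weak Hopf quasigroup $H$ over $G$ consists of a family $(H_p)_{p\in G}$ of unital, not necessarily associative, $k$-algebras with units $1_p$; coassociative linear maps $\Delta_{p,q}:H_{pq}\to H_p\otimes H_q$, written $\Delta_{p,q}(h)=h_{(1,p)}\otimes h_{(2,q)}$ (iterated: $h_{(1,p)}\otimes h_{(2,q)}\otimes h_{(3,r)}$, etc.); and a counit $\epsilon:H_e\to k$ with $(\epsilon\otimes\mathrm{id})\Delta_{e,p}=\mathrm{id}=(\mathrm{id}\otimes\epsilon)\Delta_{p,e}$; such that: (1) each $\Delta_{p,q}$ is multiplicative and $(\Delta_{p,q}\otimes\mathrm{id})\Delta_{pq,r}(1_{pqr})=(\Delta_{p,q}(1_{pq})\otimes 1_r)(1_p\otimes\Delta_{q,r}(1_{qr}))=(1_p\otimes\Delta_{q,r}(1_{qr}))(\Delta_{p,q}(1_{pq})\otimes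 1_r)$; (2) $\epsilon((gh)l)=\epsilon(g(hl))=\epsilon(gh_{(2,e)})\epsilon(h_{(1,e)}l)=\epsilon(gh_{(1,e)})\epsilon(h_{(2,e)}l)$ for $g,h,l\in H_e$; (3) writing $\Delta_{p,q}(1_{pq})=1_{(1,p)}\otimes 1_{(2,q)}$ and $\epsilon^t_p(h)=\epsilon(1_{(1,e)}h)1_{(2,p)}$, $\epsilon^s_p(h)=1_{(1,p)}\epsilon(h1_{(2,e)})$ for $h\in H_e$, there are linear maps $S_p:H_p\to H_{p^{-1}}$ with $S_p(h)=S_p(h_{(1,p)})\epsilon^t_{p^{-1}}(h_{(2,e)})=\epsilon^s_{p^{-1}}(h_{(1,e)})S_p(h_{(2,p)})$ for $h\in H_p$ and, for $h\in H_e$, $g\in H_p$: $S_{p^{-1}}(h_{(1,p^{-1})})(h_{(2,p)}g)=\epsilon^s_p(h)g$, $h_{(1,p)}(S_{p^{-1}}(h_{(2,p^{-1})})g)=\epsilon^t_p(h)g$, $(gh_{(1,p)})S_{p^{-1}}(h_{(2,p^{-1})})=g\epsilon^t_p(h)$, $(gS_{p^{-1}}(h_{(1,p^{-1})}))h_{(2,p)}=g\epsilon^s_p(h)$. It is crossed if equipped with algebra isomorphisms $\pi_p:H_q\to H_{pqp^{-1}}$ with $(\pi_p\otimes\pi_p)\Delta_{q,r}=\Delta_{pqp^{-1},prp^{-1}}\pi_p$, $\epsilon\pi_p=\epsilon$, $\pi_{pq}=\pi_p\pi_q$. The antipode is bijective if every $S_p$ is bijective. For fixed $p\in G$, a right-right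 $p$-Yetter-Drinfeld weak quasimodule over $H$ is a vector space $V$ with a bilinear map $V\times H_p\to V$, $(v,h)\mapsto v\cdot h$, and linear maps $\rho_r:V\to V\otimes H_r$ ($r\in G$), $\rho_r(v)=v_{(0)}\otimes v_{(1,r)}$, such that: (i) $v\cdot 1_p=v$, and for $h\in H_e$: $(v\cdot h_{(1,p)})\cdot S_{p^{-1}}(h_{(2,p^{-1})})=v\cdot\epsilon^t_p(h)$ and $(v\cdot S_{p^{-1}}(h_{(1,p^{-1})}))\cdot h_{(2,p)}=v\cdot\epsilon^s_p(h)$; (ii) $(\rho_{r_1}\otimes\mathrm{id}_{H_{r_2}})\rho_{r_2}=(\mathrm{id}_V\otimes\Delta_{r_1,r_2})\rho_{r_1r_2}$ and $(\mathrm{id}_V\otimes\epsilon)\rho_e=\mathrm{id}_V$; (iii) for all $v\in V$, $r\in G$, $h\in H_p$, $g,l\in H_r$: $\rho_r(v\cdot h)=v_{(0)}\cdot h_{(2,p)}\otimes S_{r^{-1}}(\pi_{p^{-1}}(h_{(1,pr^{-1}p^{-1})}))\,(v_{(1,r)}h_{(3,r)})$, $v_{(0)}\otimes(gl)v_{(1,r)}=v_{(0)}\otimes g(lv_{(1,r)})$, and $v_{(0)}\otimes(gv_{(1,r)})l=v_{(0)}\otimes g(v_{(1,r)}l)$. Morphisms are $H_p$-linear maps $f$ with $\rho^W_r f=(f\otimes\mathrm{id})\rho^V_r$ for all $r$. These form the category $\mathcal{YDWQ}(H)_p$. *)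

From HB Require Import structures.
From mathcomp Require Import all_boot all_algebra.
From mathcomp Require Import boolp.

Set Implicit Arguments.
Unset Strict Implicit.
Unset Printing Implicit Defensive.

Import GRing.Theory.
Local Open Scope ring_scope.

Section Tensors.
Variable k : fieldType.

Definition lin (U W : lmodType k) (f : U -> W) : Prop :=
  forall (a : k) (x y : U), f (a *: x + y) = a *: f x + f y.

(* Elements of a tensor product U (x) V are represented by finite formal sums
   sum_i u_i (x) v_i, i.e. by sequences of pairs.  Two such representatives
   denote the same element of U (x) V iff they have the same image under every
   bilinear map out of U x V (universal property of the tensor product). *)
Definition teq2 (A B : lmodType k) (s t : seq (A * B)) : Prop :=
  forall (W : lmodType k) (f : A -> B -> W),
    (forall b, lin (fun a => f a b)) -> (forall a, lin (f a)) ->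
    \sum_(x <- s) f x.1 x.2 = \sum_(x <- t) f x.1 x.2.

Definition teq3 (A B C : lmodType k) (s t : seq (A * B * C)) : Prop :=
  forall (W : lmodType k) (f : A -> B -> C -> W),
    (forall b c, lin (fun a => f a b c)) ->
    (forall a c, lin (fun b => f a b c)) ->
    (forall a b, lin (f a b)) ->
    \sum_(x <- s) f x.1.1 x.1.2 x.2 = \sum_(x <- t) f x.1.1 x.1.2 x.2.

Definition tscale2 (A B : lmodType k) (a : k) (s : seq (A * B)) :=
  [seq (a *: x.1, x.2) | x <- s].
End Tensors.

(* Transport between graded components H_p and H_q when p = q
   (canonical identification; the value 0 when p <> q is never used). *)
Definition tr (k : fieldType) (G : Type) (H : G -> lmodType k) (p q : G)
  (x : H p) : H q :=
  match pselect (p = q) with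
  | left e => eq_rect p (fun r => (H r : Type)) x q e
  | right _ => 0
  end.
Arguments tr {k G H p q} x.

(* Data of a crossed group-cograded (weak Hopf quasi)group structure over G:
   components H_p (k-vector spaces), products, units, comultiplications
   Delta_{p,q} : H_{pq} -> H_p (x) H_q (as representatives), counit on H_e,
   antipodes S_p : H_p -> H_{p^-1}, and crossing pi_p : H_q -> H_{p q p^-1}. *)
Record cgdata (k : fieldType) (G : groupType) := CGData {
  Hc   : G -> lmodType k;
  hmul : forall p, Hc p -> Hc p -> Hc p;
  hone : forall p, Hc p;
  cop  : forall p q, Hc (p * q)%g -> seq (Hc p * Hc q);
  cou  : Hc 1%g -> k;
  ant  : forall p, Hc p -> Hc (p^-1)%g;
  crs  : forall p q, Hc q -> Hc (p * q * p^-1)%g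
}.
Arguments hmul {k G} _ {p}.
Arguments hone {k G} _ p.
Arguments cop {k G} _ p q.
Arguments cou {k G} _.
Arguments ant {k G} _ {p}.
Arguments crs {k G} _ p {q}.

Section WHQ.
Variables (k : fieldType) (G : groupType) (H : cgdata k G).

Local Notation "x ** y" := (hmul H x y) (at level 40, left associativity).
Local Notation D := (cop H).
Local Notation eps := (cou H).
Local Notation S := (ant H).
Local Notation pi := (crs H).

Definition cop3 p q r (h : Hc H (p * q * r)%g) : seq (Hc H p * Hc H q * Hc H r) :=
  flatten [seq [seq (y.1, y.2, x.2) | y <- D p q x.1] | x <- D (p * q)%g r h].
Arguments cop3 : clear implicits.

Definition tmul2 p q (s t : seq (Hc H p * Hc H q)) :=
  [seq (x.1 ** y.1, x.2 ** y.2) | x <- s, y <- t].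
Definition tmul3 p q r (s t : seq (Hc H p * Hc H q * Hc H r)) :=
  [seq (x.1.1 ** y.1.1, x.1.2 ** y.1.2, x.2 ** y.2) | x <- s, y <- t].

Definition epst p (h : Hc H 1%g) : Hc H p :=
  \sum_(x <- D 1%g p (hone H (1 * p)%g)) eps (x.1 ** h) *: x.2.
Definition epss p (h : Hc H 1%g) : Hc H p :=
  \sum_(x <- D p 1%g (hone H (p * 1)%g)) eps (h ** x.2) *: x.1.
Arguments epst : clear implicits.
Arguments epss : clear implicits.

Definition is_cgwhq : Prop :=
  [/\ (forall p (h : Hc H p), lin (fun g : Hc H p => g ** h)) /\
      (forall p (g : Hc H p), lin (fun h : Hc H p => g ** h)),
      forall p (h : Hc H p), hone H p ** h = h /\ h ** hone H p = h,
      forall p q (a : k) (h g : Hc H (p * q)%g),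
        teq2 (D p q (a *: h + g)) (tscale2 a (D p q h) ++ D p q g),
      @lin k _ k^o eps &
      forall p, lin (ant H (p:=p))] /\
  [/\
      (forall p q r (h : Hc H (p * q * r)%g),
        teq3 (cop3 p q r h)
          (flatten [seq [seq (x.1, y.1, y.2) | y <- D q r x.2]
                      | x <- D p (q * r)%g (tr h)])) /\
      (forall p (h : Hc H p),
        \sum_(x <- D 1%g p (tr h)) eps x.1 *: x.2 = h /\
        \sum_(x <- D p 1%g (tr h)) eps x.2 *: x.1 = h),
      forall p q (g h : Hc H (p * q)%g),
        teq2 (D p q (g ** h)) (tmul2 (D p q g) (D p q h)),
      forall p q r,
        teq3 (cop3 p q r (hone H (p * q * r)%g))
          (tmul3 [seq (x.1, x.2, hone H r) | x <- D p q (hone H (p * q)%g)]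
                 [seq (hone H p, x.1, x.2) | x <- D q r (hone H (q * r)%g)])
        /\
        teq3 (cop3 p q r (hone H (p * q * r)%g))
          (tmul3 [seq (hone H p, x.1, x.2) | x <- D q r (hone H (q * r)%g)]
                 [seq (x.1, x.2, hone H r) | x <- D p q (hone H (p * q)%g)]),
      forall g h l : Hc H 1%g,
        [/\ eps ((g ** h) ** l) = eps (g ** (h ** l)),
            eps (g ** (h ** l)) =
              \sum_(x <- D 1%g 1%g (tr h)) eps (g ** x.2) * eps (x.1 ** l)
          & eps (g ** (h ** l)) =
              \sum_(x <- D 1%g 1%g (tr h)) eps (g ** x.1) * eps (x.2 ** l)]
    & forall p,
      [/\ forall h : Hc H p,
            S h = \sum_(x <- D p 1%g (tr h)) S x.1 ** epst (p^-1)%g x.2 /\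
            S h = \sum_(x <- D 1%g p (tr h)) epss (p^-1)%g x.1 ** S x.2,
          forall (h : Hc H 1%g) (g : Hc H p),
            \sum_(x <- D (p^-1)%g p (tr h)) tr (S x.1) ** (x.2 ** g)
              = epss p h ** g,
          forall (h : Hc H 1%g) (g : Hc H p),
            \sum_(x <- D p (p^-1)%g (tr h)) x.1 ** (tr (S x.2) ** g)
              = epst p h ** g,
          forall (h : Hc H 1%g) (g : Hc H p),
            \sum_(x <- D p (p^-1)%g (tr h)) (g ** x.1) ** tr (S x.2)
              = g ** epst p h
        & forall (h : Hc H 1%g) (g : Hc H p),
            \sum_(x <- D (p^-1)%g p (tr h)) (g ** tr (S x.1)) ** x.2
              = g ** epss p h]].

Definition is_crossing : Prop :=
  [/\ forall p q, lin (crs H p (q:=q)) /\ bijective (crs H p (q:=q)),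
      (forall p q (g h : Hc H q), pi p (g ** h) = pi p g ** pi p h) /\
      (forall p q, pi p (hone H q) = hone H (p * q * p^-1)%g),
      forall p q r (h : Hc H (q * r)%g),
        teq2 [seq (pi p x.1, pi p x.2) | x <- D q r h]
             (D (p * q * p^-1)%g (p * r * p^-1)%g (tr (pi p h))),
      forall p (h : Hc H 1%g), eps (tr (pi p h)) = eps h
    & forall p q r (h : Hc H r), pi (p * q)%g h = tr (pi p (pi q h))].

Definition is_crossed_cgwhq : Prop := is_cgwhq /\ is_crossing.

Definition is_YDWQ (p : G) (V : lmodType k) (act : V -> Hc H p -> V)
  (rho : forall r, V -> seq (V * Hc H r)) : Prop :=
  [/\ (forall h, lin (fun v => act v h)) /\ (forall v, lin (act v)),
      forall r (a : k) (v w : V),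
        teq2 (rho r (a *: v + w)) (tscale2 a (rho r v) ++ rho r w),
      [/\ forall v, act v (hone H p) = v,
          forall (h : Hc H 1%g) v,
            \sum_(x <- D p (p^-1)%g (tr h)) act (act v x.1) (tr (S x.2))
              = act v (epst p h)
        & forall (h : Hc H 1%g) v,
            \sum_(x <- D (p^-1)%g p (tr h)) act (act v (tr (S x.1))) x.2
              = act v (epss p h)],
      (forall r1 r2 v,
         teq3 (flatten [seq [seq (y.1, y.2, x.2) | y <- rho r1 x.1]
                          | x <- rho r2 v])
              [seq (x.1, y.1, y.2) | x <- rho (r1 * r2)%g v,
                                     y <- D r1 r2 x.2])
      /\ (forall v, \sum_(x <- rho 1%g v) eps x.2 *: x.1 = v)
    & forall r,
      [/\ forall v (h : Hc H p),
            teq2 (rho r (act v h))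
              [seq (act y.1 x.1.2,
                    tr (S (tr (pi (p^-1)%g x.1.1) : Hc H (r^-1)%g))
                      ** (y.2 ** x.2))
                 | y <- rho r v,
                   x <- cop3 (p * r^-1 * p^-1)%g p r (tr h)],
          forall v (g l : Hc H r),
            teq2 [seq (y.1, (g ** l) ** y.2) | y <- rho r v]
                 [seq (y.1, g ** (l ** y.2)) | y <- rho r v]
        & forall v (g l : Hc H r),
            teq2 [seq (y.1, (g ** y.2) ** l) | y <- rho r v]
                 [seq (y.1, g ** (y.2 ** l)) | y <- rho r v]]].

End WHQ.
Arguments is_cgwhq {k G} H.
Arguments is_crossing {k G} H.
Arguments is_crossed_cgwhq {k G} H.
Arguments is_YDWQ {k G} H p V act rho.
Arguments epst {k G} H p h.
Arguments epss {k G} H p h.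
Arguments cop3 {k G} H p q r h.

Definition conj_act (k : fieldType) (G : groupType) (H : cgdata k G)
  (p q : G) (V : lmodType k) (act : V -> Hc H p -> V)
  (v : V) (h : Hc H (q * p * q^-1)%g) : V :=
  act v (tr (crs H (q^-1)%g h)).

Definition conj_coact (k : fieldType) (G : groupType) (H : cgdata k G)
  (q : G) (V : lmodType k) (rho : forall r, V -> seq (V * Hc H r))
  (r : G) (v : V) : seq (V * Hc H r) :=
  [seq (y.1, tr (crs H q y.2)) | y <- rho (q^-1 * r * q)%g v].
Arguments conj_act {k G H p} q {V} act v h.
Arguments conj_coact {k G H} q {V} rho r v.

(* The crossing pi_q is an algebra isomorphism compatible with the
   comultiplications and the counit, so every axiom of ^qV is the pi_q-image of
   the corresponding axiom of V at the conjugate degree.  The one structure map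
   not transported by hypothesis is the antipode: pi_q S pi_q^-1 = S because the
   identities h1 S(h2) = eps^t(h) and S(h) = eps^s(h1) S(h2) determine the
   antipode. *)

From mathcomp Require Import all_boot all_algebra.
From mathcomp Require Import boolp.

Set Implicit Arguments.
Unset Strict Implicit.
Unset Printing Implicit Defensive.

Import GRing.Theory.
Local Open Scope ring_scope.

Ltac gsimpl := repeat rewrite ?invgM ?invgK ?invg1 ?mulgA ?mulg1 ?mul1g
  ?mulgK ?mulgVK ?mulVg ?mulgV ?mulKg ?mulVKg.

Section Transport.
Variables (k : fieldType) (I : Type) (F : I -> lmodType k).

Lemma tr_id a (x : F a) : (tr x : F a) = x.
Proof. by rewrite /tr; case: pselect => // e; rewrite (Prop_irrelevance e erefl). Qed.

Lemma tr_tr a b c (x : F a) : a = b -> (tr (tr x : F b) : F c) = tr x.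
Proof. by move=> e; subst b; rewrite tr_id. Qed.

Lemma tr_lin a b : lin (fun x : F a => (tr x : F b)).
Proof.
move=> c x y; rewrite /tr; case: pselect => [e|_]; last by rewrite scaler0 addr0.
by case: _ / e.
Qed.

Lemma tr_fun (J : I -> I) (f : forall a, F a -> F (J a)) a b c (x : F a) :
  a = b -> (tr (f a x) : F c) = tr (f b (tr x)).
Proof. by move=> e; subst b; rewrite tr_id. Qed.

Lemma tr_pairs (f : forall a b, seq (F a * F b)) a b a' b' :
  a = a' -> b = b' -> f a' b' = [seq (tr y.1, tr y.2) | y <- f a b].
Proof.
move=> e1 e2; subst a' b'.
by rewrite -[LHS]map_id; apply: eq_map => -[y z]; rewrite /= !tr_id.
Qed.

Lemma tr_pairsr (A : Type) (f : forall b, seq (A * F b)) b b' :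
  b = b' -> f b' = [seq (y.1, tr y.2) | y <- f b].
Proof.
move=> e; subst b'.
by rewrite -[LHS]map_id; apply: eq_map => -[y z]; rewrite /= tr_id.
Qed.

End Transport.

Section Linear.
Variable k : fieldType.
Implicit Types U V W : lmodType k.

Lemma linD U V (f : U -> V) : lin f -> forall x y, f (x + y) = f x + f y.
Proof. by move=> hf x y; have := hf 1 x y; rewrite !scale1r. Qed.

Lemma lin0 U V (f : U -> V) : lin f -> f 0 = 0.
Proof.
move=> hf; have := hf 1 0 0; rewrite !scale1r addr0.
by move/(congr1 (fun z => z - f 0)); rewrite addrK subrr.
Qed.

Lemma linZ U V (f : U -> V) : lin f -> forall a x, f (a *: x) = a *: f x.
Proof. by move=> hf a x; have := hf a x 0; rewrite !addr0 lin0 // addr0. Qed.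

Lemma lin_sum U V (f : U -> V) : lin f -> forall (J : Type) (r : seq J) (E : J -> U),
  f (\sum_(i <- r) E i) = \sum_(i <- r) f (E i).
Proof.
move=> hf J r E; elim: r => [|x r IH]; first by rewrite !big_nil lin0.
by rewrite !big_cons linD // IH.
Qed.

Lemma lin_comp U V W (f : V -> W) (g : U -> V) : lin f -> lin g -> lin (fun x => f (g x)).
Proof. by move=> hf hg a x y; rewrite hg hf. Qed.

Lemma lin_sumf U V (J : Type) (r : seq J) (f : J -> U -> V) :
  (forall i, lin (f i)) -> lin (fun x => \sum_(i <- r) f i x).
Proof.
move=> hf a x y; elim: r => [|i r IH]; first by rewrite !big_nil scaler0 addr0.
by rewrite !big_cons IH hf scalerDr addrACA.
Qed.

Lemma lin_scalel U V (f : U -> k^o) (v : V) : lin f -> lin (fun x => f x *: v).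
Proof. by move=> hf a x y; rewrite hf scalerDl scalerA. Qed.

Lemma teq2_trans (A B : lmodType k) (s t u : seq (A * B)) :
  teq2 s t -> teq2 t u -> teq2 s u.
Proof. by move=> h h' W f h1 h2; rewrite (h W f h1 h2) (h' W f h1 h2). Qed.

Lemma teq2_mapr (A B B' : lmodType k) (g : B -> B') (s t : seq (A * B)) :
  lin g -> teq2 s t -> teq2 [seq (y.1, g y.2) | y <- s] [seq (y.1, g y.2) | y <- t].
Proof.
move=> hg hst W f f1 f2; rewrite !big_map.
by apply: (hst W (fun a b => f a (g b))) => [b|a]; [exact: f1 | exact: lin_comp (f2 a) hg].
Qed.

Lemma teq2_mapr_intertwine (A B B' : lmodType k) (g : B -> B')
    (E E' : B' -> B') (E0 E0' : B -> B) (s : seq (A * B)) :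
  lin g -> (forall y, E (g y) = g (E0 y)) -> (forall y, E' (g y) = g (E0' y)) ->
  teq2 [seq (y.1, E0 y.2) | y <- s] [seq (y.1, E0' y.2) | y <- s] ->
  teq2 [seq (y.1, E y.2) | y <- [seq (y.1, g y.2) | y <- s]]
       [seq (y.1, E' y.2) | y <- [seq (y.1, g y.2) | y <- s]].
Proof.
move=> hg hE hE' /(teq2_mapr hg); rewrite -!map_comp.
by congr teq2; apply: eq_map => y /=; rewrite ?hE ?hE'.
Qed.

End Linear.

Section CrossedWHQ.
Variables (k : fieldType) (G : groupType) (H : cgdata k G).
Hypotheses (HW : is_cgwhq H) (HX : is_crossing H).

Local Notation "x ** y" := (hmul H x y) (at level 40, left associativity).
Local Notation Hc := (Hc H).
Local Notation D := (cop H).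
Local Notation eps := (cou H).
Local Notation S := (ant H).
Local Notation pi := (crs H).
Local Notation one := (hone H).

Lemma hmul_linl p (h : Hc p) : lin (fun g : Hc p => g ** h).
Proof. by case: HW => [[[]]]. Qed.

Lemma hmul_linr p (g : Hc p) : lin (fun h : Hc p => g ** h).
Proof. by case: HW => [[[]]]. Qed.

Lemma hmulr1 p (h : Hc p) : h ** one p = h.
Proof. by case: HW => [[_ h1 _ _ _] _]; case: (h1 p h). Qed.

Lemma cou_lin : @lin k _ k^o eps.
Proof. by case: HW => [[]]. Qed.

Lemma ant_lin p : lin (@ant k G H p).
Proof. by case: HW => [[]]. Qed.

Lemma epss_lin c : lin (epss H c).
Proof.
apply: lin_sumf => x.
exact: lin_scalel (fun h => eps (h ** x.2)) _ (lin_comp cou_lin (hmul_linl _)).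
Qed.

Lemma cop_sum_lin (W : lmodType k) a b (f : Hc a -> Hc b -> W) :
  (forall y, lin (fun x => f x y)) -> (forall x, lin (f x)) ->
  lin (fun h : Hc (a * b)%g => \sum_(x <- D a b h) f x.1 x.2).
Proof.
case: HW => [[_ _ hD _ _] _] f1 f2 c h g /=.
rewrite (hD _ _ c h g _ _ f1 f2) big_cat /= big_map scaler_sumr.
by congr (_ + _); apply: eq_bigr => x _ /=; rewrite (linZ (f1 _)).
Qed.

Lemma cop_coassoc p q r (h : Hc (p * q * r)%g) :
  teq3 (cop3 H p q r h)
       (flatten [seq [seq (x.1, y.1, y.2) | y <- D q r x.2] | x <- D p (q * r)%g (tr h)]).
Proof. by case: HW => [_ [[]]]. Qed.

Lemma ant_cop_epst p (h : Hc p) :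
  S h = \sum_(x <- D p 1%g (tr h)) S x.1 ** epst H (p^-1)%g x.2.
Proof. by case: HW => [_ [_ _ _ _ /(_ p) [/(_ h) []]]]. Qed.

Lemma ant_cop_epss p (h : Hc p) :
  S h = \sum_(x <- D 1%g p (tr h)) epss H (p^-1)%g x.1 ** S x.2.
Proof. by case: HW => [_ [_ _ _ _ /(_ p) [/(_ h) []]]]. Qed.

Lemma ant_cop_mul p (h : Hc 1%g) (g : Hc p) :
  \sum_(x <- D (p^-1)%g p (tr h)) tr (S x.1) ** (x.2 ** g) = epss H p h ** g.
Proof. by case: HW => [_ [_ _ _ _ /(_ p) []]]. Qed.

Lemma cop_ant p (h : Hc 1%g) :
  \sum_(x <- D p (p^-1)%g (tr h)) x.1 ** (tr (S x.2) : Hc p) = epst H p h.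
Proof.
case: HW => [_ [_ _ _ _ /(_ p) [_ _ /(_ h (one p)) + _ _]]].
by rewrite hmulr1 => <-; apply: eq_bigr => x _; rewrite hmulr1.
Qed.

Lemma tr_hmul a b (x y : Hc a) : a = b -> (tr (x ** y) : Hc b) = tr x ** tr y.
Proof. by move=> e; subst b; rewrite !tr_id. Qed.

Lemma tr_hone a b : a = b -> (tr (one a) : Hc b) = one b.
Proof. by move=> e; subst b; rewrite tr_id. Qed.

(* S h = S h1 eps^t(h2) = S h1 (h2 T h3) = eps^s(h1) T h2 = T h, the middle
   step by coassociativity. *)
Lemma ant_unique (T : forall a, Hc a -> Hc (a^-1)%g) :
  (forall a, lin (T a)) ->
  (forall c (h : Hc 1%g),
     \sum_(x <- D c (c^-1)%g (tr h)) x.1 ** (tr (T _ x.2) : Hc c) = epst H c h) ->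
  (forall a (h : Hc a),
     T a h = \sum_(x <- D 1%g a (tr h)) epss H (a^-1)%g x.1 ** T a x.2) ->
  forall a (h : Hc a), S h = T a h.
Proof.
move=> Tlin T_epst T_epss p h.
pose f (u : Hc p) (w : Hc (p^-1)%g) (z : Hc (p^-1^-1)%g) :=
  S u ** (w ** (tr (T _ z) : Hc (p^-1)%g)).
have co := cop_coassoc (tr h : Hc (p * p^-1 * p^-1^-1)%g) (f := f).
rewrite /cop3 !big_flatten /= !big_map tr_tr in co; last by gsimpl.
rewrite (@tr_pairs _ _ _ (fun a b => D a b (tr h)) p 1%g _ (p^-1 * p^-1^-1)%g)
  ?big_map /= in co; try by gsimpl.
rewrite (@tr_pairs _ _ _ (fun a b => D a b (tr h)) 1%g p (p * p^-1)%g (p^-1^-1)%g)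
  ?big_map /= in co; try by gsimpl.
have Tt (z : Hc p) : (tr (T _ (tr z : Hc (p^-1^-1)%g)) : Hc (p^-1)%g) = T p z.
  by rewrite -(@tr_fun _ _ _ _ T) ?tr_id //; gsimpl.
have {}co : \sum_(x <- D p 1%g (tr h)) S x.1 ** epst H (p^-1)%g x.2 =
            \sum_(x <- D 1%g p (tr h)) epss H (p^-1)%g x.1 ** T p x.2.
  transitivity (\sum_(x <- D 1%g p (tr h))
    \sum_(i <- [seq (y.1, y.2, tr x.2) | y <- D p (p^-1)%g (tr x.1)]) f i.1.1 i.1.2 i.2).
    rewrite co => [|b c|a c|a b].
    - apply: eq_bigr => x _; rewrite big_map -T_epst (lin_sum (hmul_linr _)) tr_id.
      by apply: eq_bigr => y _; rewrite /f.
    - exact: lin_comp (hmul_linl _) (@ant_lin _).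
    - exact: lin_comp (hmul_linr _) (hmul_linl _).
    - apply: lin_comp (hmul_linr _) (lin_comp (hmul_linr _) _).
      exact: lin_comp (@tr_lin _ _ _ _ _) (Tlin _).
  apply: eq_bigr => x _; rewrite big_map -ant_cop_mul.
  rewrite (@tr_pairs _ _ _ (fun a b => D a b (tr x.1)) p (p^-1)%g (p^-1^-1)%g (p^-1)%g)
    ?big_map; try by gsimpl.
  apply: eq_bigr => y _; rewrite /f Tt tr_id.
  by rewrite -(@tr_fun _ _ _ _ (@ant k G H)) ?tr_id //; gsimpl.
by rewrite ant_cop_epst co -T_epss.
Qed.

Lemma crs_lin p q : lin (@crs k G H p q).
Proof. by case: HX => /(_ p q) []. Qed.

Lemma crs_mul p q (g h : Hc q) : pi p (g ** h) = pi p g ** pi p h.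
Proof. by case: HX => _ []. Qed.

Lemma crs_comp p q r (h : Hc r) : pi (p * q)%g h = tr (pi p (pi q h)).
Proof. by case: HX. Qed.

(* [crsT q b x] is pi_q x and [antT b x] is S x, for x : H_a, read in a
   component b that is only propositionally equal to q a q^-1, resp. a^-1. *)
Definition crsT q b {a} (x : Hc a) : Hc b := tr (pi q x).
Definition antT b {a} (x : Hc a) : Hc b := tr (S x).

Lemma crsT_tr q b a a' (x : Hc a) : a = a' -> crsT q b (tr x : Hc a') = crsT q b x.
Proof. by move=> e; subst a'; rewrite tr_id. Qed.

Lemma tr_crsT q a b c (x : Hc a) :
  b = (q * a * q^-1)%g -> (tr (crsT q b x) : Hc c) = crsT q c x.
Proof. by move=> e; rewrite /crsT tr_tr // e. Qed.

Lemma crsT_comp q q' a b c (x : Hc a) : b = (q' * a * q'^-1)%g ->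
  crsT q c (crsT q' b x) = crsT (q * q') c x.
Proof.
move=> e; rewrite /crsT crs_comp tr_tr; last by gsimpl.
by rewrite -(@tr_fun _ _ _ _ (fun a => @crs k G H q a)) // e.
Qed.

Lemma crsT_lin q a b : lin (@crsT q b a).
Proof. exact: lin_comp (@tr_lin _ _ _ _ _) (@crs_lin _ _). Qed.

Lemma crsT_mul q a b (x y : Hc a) :
  b = (q * a * q^-1)%g -> crsT q b (x ** y) = crsT q b x ** crsT q b y.
Proof. by move=> e; rewrite /crsT crs_mul tr_hmul // e. Qed.

Lemma crsT_one q a b : b = (q * a * q^-1)%g -> crsT q b (one a) = one b.
Proof. by case: HX => _ [_ crs_one] _ _ _ e; rewrite /crsT crs_one tr_hone // e. Qed.

Lemma crsT_cou q a (x : Hc a) : a = 1%g -> eps (crsT q 1 x) = eps (tr x : Hc 1%g).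
Proof. by case: HX => _ _ _ crs_cou _ e; subst a; rewrite tr_id /crsT crs_cou. Qed.

Lemma crsT_cop q a b a' b' (x : Hc (a * b)%g) :
  a' = (q * a * q^-1)%g -> b' = (q * b * q^-1)%g ->
  teq2 [seq (crsT q a' y.1, crsT q b' y.2) | y <- D a b x] (D a' b' (crsT q (a' * b') x)).
Proof.
case: HX => _ _ crs_cop _ _ e1 e2; subst a' b'.
have -> : [seq (crsT q (q * a * q^-1) y.1, crsT q (q * b * q^-1) y.2) | y <- D a b x]
          = [seq (pi q y.1, pi q y.2) | y <- D a b x].
  by apply: eq_map => y; rewrite /crsT !tr_id.
exact: crs_cop.
Qed.

Lemma crsT1 a b (x : Hc a) : crsT 1 b x = tr x.
Proof.
pose a' := (1 * a * 1^-1)%g; pose c := (1 * a' * 1^-1)%g.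
have ea : a = a' by rewrite /a'; gsimpl.
have pi11 : pi 1 (pi 1 x) = pi 1 (tr x : Hc a').
  have := @crsT_comp 1 1 a a' c x erefl.
  rewrite [(1 * 1)%g]mulg1 /crsT /c /a' !tr_id => ->.
  by rewrite (@tr_fun _ _ _ _ (fun a => @crs k G H 1 a) _ a') // tr_id.
have pi1 : pi 1 x = tr x.
  by case: HX => /(_ 1%g a') [_ [g gK _]] _ _ _ _; rewrite -[LHS]gK pi11 gK.
by rewrite /crsT pi1 tr_tr.
Qed.

Lemma crsT_inv q q' a b c (x : Hc a) : (q' * q = 1)%g -> b = (q * a * q^-1)%g ->
  crsT q' c (crsT q b x) = tr x.
Proof. by move=> e1 e2; rewrite crsT_comp // e1 crsT1. Qed.

Lemma crsTK q r (x : Hc r) : crsT q r (crsT (q^-1)%g (q^-1 * r * q)%g x) = x.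
Proof. by rewrite crsT_inv ?tr_id //; gsimpl. Qed.

Lemma antT_tr b a a' (x : Hc a) : a = a' -> antT b (tr x : Hc a') = antT b x.
Proof. by move=> e; subst a'; rewrite tr_id. Qed.

Lemma antT_lin a b : lin (@antT b a).
Proof. exact: lin_comp (@tr_lin _ _ _ _ _) (@ant_lin _). Qed.

Lemma crsT_epst q c b (u : Hc 1%g) : b = (q * c * q^-1)%g ->
  crsT q b (epst H c u) = epst H b (crsT q 1 u).
Proof.
move=> e; rewrite /epst (lin_sum (crsT_lin _ _)).
have lin1 (y2 : Hc b) : lin (fun y1 => eps (y1 ** crsT q 1 u) *: y2).
  exact: lin_scalel (lin_comp cou_lin (hmul_linl _)).
have lin2 y1 : lin (fun y2 : Hc b => eps (y1 ** crsT q 1 u) *: y2).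
  by move=> a x y; rewrite scalerDr scalerA mulrC -scalerA.
have := @crsT_cop q 1%g c 1%g b (one (1 * c)%g) ltac:(by gsimpl) e _ _ lin1 lin2.
rewrite big_map crsT_one => [<-|]; last by rewrite e; gsimpl.
apply: eq_bigr => x _ /=; rewrite (linZ (crsT_lin _ _)); congr (_ *: _).
by rewrite -crsT_mul ?crsT_cou ?tr_id //; gsimpl.
Qed.

Lemma crsT_epss q c b (u : Hc 1%g) : b = (q * c * q^-1)%g ->
  crsT q b (epss H c u) = epss H b (crsT q 1 u).
Proof.
move=> e; rewrite /epss (lin_sum (crsT_lin _ _)).
have lin1 y2 : lin (fun y1 : Hc b => eps (crsT q 1 u ** y2) *: y1).
  by move=> a x y; rewrite scalerDr scalerA mulrC -scalerA.
have lin2 (y1 : Hc b) : lin (fun y2 => eps (crsT q 1 u ** y2) *: y1).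
  exact: lin_scalel (lin_comp cou_lin (hmul_linr _)).
have := @crsT_cop q c 1%g b 1%g (one (c * 1)%g) e ltac:(by gsimpl) _ _ lin1 lin2.
rewrite big_map crsT_one => [<-|]; last by rewrite e; gsimpl.
apply: eq_bigr => x _ /=; rewrite (linZ (crsT_lin _ _)); congr (_ *: _).
by rewrite -crsT_mul ?crsT_cou ?tr_id //; gsimpl.
Qed.

Definition ant_conj q a (y : Hc a) : Hc (a^-1)%g :=
  crsT q (a^-1)%g (S (crsT (q^-1)%g (q^-1 * a * q)%g y)).

Lemma ant_conj_lin q a : lin (@ant_conj q a).
Proof. exact: lin_comp (crsT_lin _ _) (lin_comp (@ant_lin _) (crsT_lin _ _)). Qed.

Lemma cop_ant_conj q c (h : Hc 1%g) :
  \sum_(x <- D c (c^-1)%g (tr h)) x.1 ** (tr (ant_conj q x.2) : Hc c) = epst H c h.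
Proof.
pose c' := (q^-1 * c * q)%g; pose d := (q^-1 * c^-1 * q)%g.
have E (x : Hc c * Hc (c^-1)%g) : x.1 ** (tr (ant_conj q x.2) : Hc c) =
    crsT q c (crsT (q^-1)%g c' x.1 ** antT c' (crsT (q^-1)%g d x.2)).
  rewrite crsT_mul; last by rewrite /c'; gsimpl.
  rewrite crsT_inv ?tr_id; try by rewrite /c'; gsimpl.
  rewrite /antT crsT_tr; last by rewrite /d /c'; gsimpl.
  by rewrite /ant_conj tr_crsT //; rewrite /d; gsimpl.
under eq_bigr do rewrite E.
rewrite -(lin_sum (crsT_lin _ _)).
have := @crsT_cop (q^-1)%g c (c^-1)%g c' d (tr h)
  ltac:(by rewrite /c'; gsimpl) ltac:(by rewrite /d; gsimpl)
  _ (fun y z => y ** antT c' z) (fun z => hmul_linl _)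
  (fun y => lin_comp (hmul_linr _) (antT_lin _)).
rewrite big_map /= => ->.
rewrite crsT_tr; last by gsimpl.
rewrite (@tr_pairs _ _ _ (fun a b => D a b (crsT (q^-1)%g (a * b)%g h))
  c' (c'^-1)%g c' d) ?big_map; try by rewrite /d /c'; gsimpl.
have := cop_ant c' (crsT (q^-1)%g 1%g h); rewrite tr_crsT; last by gsimpl.
have -> : \sum_(i <- D c' (c'^-1)%g (crsT (q^-1)%g (c' * c'^-1)%g h))
    (tr i.1 : Hc c') ** antT c' (tr i.2 : Hc d) =
  \sum_(x <- D c' (c'^-1)%g (crsT (q^-1)%g (c' * c'^-1)%g h)) x.1 ** (tr (S x.2) : Hc c').
  by apply: eq_bigr => x _; rewrite tr_id antT_tr //; rewrite /d /c'; gsimpl.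
move=> ->; rewrite crsT_epst; last by rewrite /c'; gsimpl.
by rewrite crsT_inv ?tr_id //; gsimpl.
Qed.

Lemma ant_conj_cop_epss q a (h : Hc a) :
  ant_conj q h = \sum_(x <- D 1%g a (tr h)) epss H (a^-1)%g x.1 ** ant_conj q x.2.
Proof.
pose a' := (q^-1 * a * q)%g.
pose f (y : Hc 1%g) (z : Hc a') := epss H (a^-1)%g (crsT q 1 y) ** crsT q (a^-1)%g (S z).
have E (x : Hc 1%g * Hc a) : epss H (a^-1)%g x.1 ** ant_conj q x.2 =
    f (crsT (q^-1)%g 1 x.1) (crsT (q^-1)%g a' x.2).
  by rewrite /f crsT_inv ?tr_id //; gsimpl.
under [RHS]eq_bigr do rewrite E.
have := @crsT_cop (q^-1)%g 1%g a 1%g a' (tr h) ltac:(by gsimpl) ltac:(by rewrite /a'; gsimpl)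
  _ f (fun z => lin_comp (hmul_linl _) (lin_comp (epss_lin _) (crsT_lin _ _)))
  (fun y => lin_comp (hmul_linr _) (lin_comp (crsT_lin _ _) (@ant_lin _))).
rewrite big_map /= => ->.
rewrite {1}/ant_conj ant_cop_epss crsT_tr ?tr_crsT; try by rewrite /a'; gsimpl.
rewrite (lin_sum (crsT_lin _ _)); apply: eq_bigr => z _.
rewrite /f crsT_mul; last by rewrite /a'; gsimpl.
by rewrite crsT_epss //; rewrite /a'; gsimpl.
Qed.

Lemma ant_conjE q a (h : Hc a) : S h = ant_conj q h.
Proof.
apply: (ant_unique (T := fun a => @ant_conj q a)) => [b|c u|b u].
- exact: ant_conj_lin.
- exact: cop_ant_conj.
- exact: ant_conj_cop_epss.
Qed.

Lemma antT_crsT q a b c (x : Hc a) : b = (q * a * q^-1)%g -> c = (b^-1)%g ->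
  antT c (crsT q b x) = crsT q c (S x).
Proof.
move=> e1 e2; rewrite /antT (ant_conjE q) /ant_conj crsT_inv; try by rewrite ?e1; gsimpl.
rewrite tr_crsT; last by rewrite e1; gsimpl.
rewrite /crsT [RHS](@tr_fun _ _ _ (fun a => (q * a^-1 * q^-1)%g)
  (fun a y => pi q (S y)) a (q^-1 * b * q)%g) //.
all: by rewrite ?e1; gsimpl.
Qed.

Lemma crsT_cop3 q a b c a' b' c' (h : Hc (a * b * c)%g) :
  a' = (q * a * q^-1)%g -> b' = (q * b * q^-1)%g -> c' = (q * c * q^-1)%g ->
  teq3 [seq (crsT q a' x.1.1, crsT q b' x.1.2, crsT q c' x.2) | x <- cop3 H a b c h]
       (cop3 H a' b' c' (crsT q (a' * b' * c') h)).
Proof.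
move=> e1 e2 e3 W f f1 f2 f3.
rewrite big_map /cop3 !big_flatten !big_map.
pose g (u : Hc (a' * b')%g) (w : Hc c') := \sum_(y <- D a' b' u) f y.1 y.2 w.
have := @crsT_cop q (a * b)%g c (a' * b')%g c' h ltac:(by rewrite e1 e2; gsimpl) e3 _ g
  (fun w => cop_sum_lin (fun y => f1 _ _) (fun x => f2 _ _))
  (fun u => lin_sumf _ (fun y => f3 _ _)).
rewrite big_map /= => E.
transitivity (\sum_(x <- D (a' * b')%g c' (crsT q (a' * b' * c')%g h)) g x.1 x.2); last first.
  by apply: eq_bigr => x _; rewrite big_map.
rewrite -E; apply: eq_bigr => x _; rewrite big_map /g /=.
have := @crsT_cop q a b a' b' x.1 e1 e2 _ (fun y1 y2 => f y1 y2 (crsT q c' x.2))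
  (fun y => f1 _ _) (fun y => f2 _ _).
by rewrite big_map.
Qed.

Section Conjugation.
Variables (p q : G) (V : lmodType k) (act : V -> Hc p -> V).
Variable rho : forall r : G, V -> seq (V * Hc r).
Hypothesis YD : is_YDWQ H p V act rho.

Local Notation p' := (q * p * q^-1)%g.
Local Notation act' := (conj_act q act).
Local Notation rho' := (conj_coact q rho).

Lemma conj_actE v h : act' v h = act v (crsT (q^-1)%g p h).
Proof. by []. Qed.

Lemma conj_coactE r v :
  rho' r v = [seq (y.1, crsT q r y.2) | y <- rho (q^-1 * r * q)%g v].
Proof. by []. Qed.

Lemma conj_act_lin : (forall h, lin (fun v => act' v h)) /\ (forall v, lin (act' v)).
Proof.
case: YD => [[act_linl act_linr] _ _ _ _]; split=> [h|v]; first exact: act_linl.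
exact: lin_comp (act_linr v) (crsT_lin _ _).
Qed.

Lemma conj_coact_lin r (a : k) (v w : V) :
  teq2 (rho' r (a *: v + w)) (tscale2 a (rho' r v) ++ rho' r w).
Proof.
case: YD => _ rho_lin _ _ _; rewrite !conj_coactE.
have -> : forall l1 l2 : seq (V * Hc (q^-1 * r * q)%g),
    tscale2 a [seq (y.1, crsT q r y.2) | y <- l1] ++ [seq (y.1, crsT q r y.2) | y <- l2]
    = [seq (y.1, crsT q r y.2) | y <- tscale2 a l1 ++ l2].
  by move=> l1 l2; rewrite map_cat /tscale2 -!map_comp.
exact: teq2_mapr (crsT_lin q r) (rho_lin _ a v w).
Qed.

Lemma conj_act1 v : act' v (one p') = v.
Proof.
by case: YD => _ _ [act1 _ _] _ _; rewrite conj_actE crsT_one ?act1 //; gsimpl.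
Qed.

Lemma conj_act_epst (h : Hc 1%g) v :
  \sum_(x <- D p' (p'^-1)%g (tr h)) act' (act' v x.1) (tr (S x.2) : Hc p')
    = act' v (epst H p' h).
Proof.
case: YD => [[act_linl act_linr] _ [_ act_epst _] _ _].
pose f (y : Hc p) (z : Hc (p^-1)%g) := act (act v y) (antT p z).
transitivity (\sum_(x <- D p' (p'^-1)%g (tr h))
                f (crsT (q^-1)%g p x.1) (crsT (q^-1)%g (p^-1)%g x.2)).
  apply: eq_bigr => x _; rewrite /f !conj_actE crsT_tr; last by gsimpl.
  by rewrite antT_crsT //; gsimpl.
have := @crsT_cop (q^-1)%g p' (p'^-1)%g p (p^-1)%g (tr h) ltac:(by gsimpl) ltac:(by gsimpl) _ f
  (fun z => lin_comp (act_linl _) (act_linr v)) (fun y => lin_comp (act_linr _) (antT_lin _)).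
rewrite big_map /= => ->.
rewrite crsT_tr; last by gsimpl.
rewrite -(@tr_crsT (q^-1)%g 1%g 1%g (p * p^-1)%g h); last by gsimpl.
by rewrite act_epst conj_actE crsT_epst //; gsimpl.
Qed.

Lemma conj_act_epss (h : Hc 1%g) v :
  \sum_(x <- D (p'^-1)%g p' (tr h)) act' (act' v (tr (S x.1) : Hc p')) x.2
    = act' v (epss H p' h).
Proof.
case: YD => [[act_linl act_linr] _ [_ _ act_epss] _ _].
pose f (y : Hc (p^-1)%g) (z : Hc p) := act (act v (antT p y)) z.
transitivity (\sum_(x <- D (p'^-1)%g p' (tr h))
                f (crsT (q^-1)%g (p^-1)%g x.1) (crsT (q^-1)%g p x.2)).
  apply: eq_bigr => x _; rewrite /f !conj_actE crsT_tr; last by gsimpl.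
  by rewrite antT_crsT //; gsimpl.
have := @crsT_cop (q^-1)%g (p'^-1)%g p' (p^-1)%g p (tr h) ltac:(by gsimpl) ltac:(by gsimpl) _ f
  (fun z => lin_comp (act_linl _) (lin_comp (act_linr v) (antT_lin _))) (fun y => act_linr _).
rewrite big_map /= => ->.
rewrite crsT_tr; last by gsimpl.
rewrite -(@tr_crsT (q^-1)%g 1%g 1%g (p^-1 * p)%g h); last by gsimpl.
by rewrite act_epss conj_actE crsT_epss //; gsimpl.
Qed.

Lemma conj_coact_coassoc r1 r2 v :
  teq3 (flatten [seq [seq (y.1, y.2, x.2) | y <- rho' r1 x.1] | x <- rho' r2 v])
       [seq (x.1, y.1, y.2) | x <- rho' (r1 * r2)%g v, y <- D r1 r2 x.2].
Proof.
case: YD => _ _ _ [rho_coassoc _] _ W f f1 f2 f3.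
pose s1 := (q^-1 * r1 * q)%g; pose s2 := (q^-1 * r2 * q)%g.
have co := rho_coassoc s1 s2 v W (fun a b c => f a (crsT q r1 b) (crsT q r2 c))
  (fun b c => f1 _ _) (fun a c => lin_comp (f2 _ _) (crsT_lin _ _))
  (fun a b => lin_comp (f3 _ _) (crsT_lin _ _)).
rewrite big_flatten /= !big_map big_allpairs_dep /= in co.
rewrite big_flatten /= !big_map big_allpairs_dep /=.
transitivity (\sum_(j <- rho s2 v)
  \sum_(i <- [seq (y.1, y.2, j.2) | y <- rho s1 j.1]) f i.1.1 (crsT q r1 i.1.2) (crsT q r2 i.2)).
  by apply: eq_bigr => j _; rewrite conj_coactE !big_map.
rewrite co conj_coactE big_map.
rewrite (@tr_pairsr _ _ _ _ (fun b => rho b v) (s1 * s2)%g (q^-1 * (r1 * r2) * q)%g);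
  last by gsimpl.
rewrite big_map; apply: eq_bigr => j _ /=.
have := @crsT_cop q s1 s2 r1 r2 j.2 ltac:(by gsimpl) ltac:(by gsimpl)
  _ (f j.1) (fun b => f2 _ _) (fun a => f3 _ _).
by rewrite big_map /= => ->; rewrite crsT_tr //; gsimpl.
Qed.

Lemma conj_coact_counit v : \sum_(x <- rho' 1%g v) eps x.2 *: x.1 = v.
Proof.
case: YD => _ _ _ [_ rho_counit] _; rewrite conj_coactE big_map /=.
rewrite (@tr_pairsr _ _ _ _ (fun b => rho b v) 1%g (q^-1 * 1 * q)%g) ?big_map; last by gsimpl.
rewrite -[RHS]rho_counit; apply: eq_bigr => y _ /=.
by rewrite crsT_tr ?crsT_cou ?tr_id //; gsimpl.
Qed.

Lemma conj_coact_mulAl r v (g l : Hc r) :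
  teq2 [seq (y.1, (g ** l) ** y.2) | y <- rho' r v]
       [seq (y.1, g ** (l ** y.2)) | y <- rho' r v].
Proof.
case: YD => _ _ _ _ /(_ (q^-1 * r * q)%g) [_ rho_mulA _].
rewrite conj_coactE; set s := (q^-1 * r * q)%g.
pose g0 := crsT (q^-1)%g s g; pose l0 := crsT (q^-1)%g s l.
have hE y : (g ** l) ** crsT q r y = crsT q r ((g0 ** l0) ** y).
  by rewrite !crsT_mul ?crsTK //; gsimpl.
have hE' y : g ** (l ** crsT q r y) = crsT q r (g0 ** (l0 ** y)).
  by rewrite !crsT_mul ?crsTK //; gsimpl.
exact: (teq2_mapr_intertwine (E := fun z => (g ** l) ** z) (E' := fun z => g ** (l ** z))
  (crsT_lin q r) hE hE' (rho_mulA v g0 l0)).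
Qed.

Lemma conj_coact_mulAr r v (g l : Hc r) :
  teq2 [seq (y.1, (g ** y.2) ** l) | y <- rho' r v]
       [seq (y.1, g ** (y.2 ** l)) | y <- rho' r v].
Proof.
case: YD => _ _ _ _ /(_ (q^-1 * r * q)%g) [_ _ rho_mulA].
rewrite conj_coactE; set s := (q^-1 * r * q)%g.
pose g0 := crsT (q^-1)%g s g; pose l0 := crsT (q^-1)%g s l.
have hE y : (g ** crsT q r y) ** l = crsT q r ((g0 ** y) ** l0).
  by rewrite !crsT_mul ?crsTK //; gsimpl.
have hE' y : g ** (crsT q r y ** l) = crsT q r (g0 ** (y ** l0)).
  by rewrite !crsT_mul ?crsTK //; gsimpl.
exact: (teq2_mapr_intertwine (E := fun z => (g ** z) ** l) (E' := fun z => g ** (z ** l))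
  (crsT_lin q r) hE hE' (rho_mulA v g0 l0)).
Qed.

Lemma conj_coact_act r v (h : Hc p') :
  teq2 (rho' r (act' v h))
    [seq (act' y.1 x.1.2, tr (S (tr (pi (p'^-1)%g x.1.1) : Hc (r^-1)%g)) ** (y.2 ** x.2))
       | y <- rho' r v, x <- cop3 H (p' * r^-1 * p'^-1)%g p' r (tr h)].
Proof.
case: YD => [[_ act_linr] _ _ _ /(_ (q^-1 * r * q)%g) [rho_act _ _]].
set s := (q^-1 * r * q)%g.
pose A := (p * s^-1 * p^-1)%g; pose A' := (p' * r^-1 * p'^-1)%g.
rewrite conj_coactE conj_actE.
apply: teq2_trans (teq2_mapr (crsT_lin q r) (rho_act v _)) _ => W f f1 f2.
rewrite big_map !big_allpairs_dep big_map; apply: eq_bigr => y _ /=.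
pose phi (u : Hc A) (w : Hc p) (z : Hc s) :=
  f (act y.1 w) (crsT q r (antT s (crsT (p^-1)%g (s^-1)%g u) ** (y.2 ** z))).
have e : (tr (crsT (q^-1)%g p h) : Hc (A * p * s)%g) =
         crsT (q^-1)%g (A * p * s)%g (tr h : Hc (A' * p' * r)%g).
  by rewrite tr_crsT ?crsT_tr //; rewrite /A /A' /s; gsimpl.
transitivity (\sum_(x <- cop3 H A p s
                  (crsT (q^-1)%g (A * p * s)%g (tr h : Hc (A' * p' * r)%g)))
                 phi x.1.1 x.1.2 x.2).
  by rewrite -e.
have := @crsT_cop3 (q^-1)%g A' p' r A p s (tr h) ltac:(rewrite /A /A' /s; by gsimpl)
  ltac:(by gsimpl) ltac:(by gsimpl) W phi
  (fun w z => lin_comp (f2 _) (lin_comp (crsT_lin _ _) (lin_comp (hmul_linl _)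
                (lin_comp (antT_lin _) (crsT_lin _ _)))))
  (fun u z => lin_comp (f1 _) (act_linr _))
  (fun u w => lin_comp (f2 _) (lin_comp (crsT_lin _ _)
                (lin_comp (hmul_linr _) (hmul_linr _)))).
rewrite big_map => <-; apply: eq_bigr => x _.
rewrite /phi conj_actE /=; congr (f _ _).
rewrite !crsT_mul ?crsTK; try by rewrite /s; gsimpl.
congr (_ ** _).
rewrite /antT crsT_tr; last by rewrite /s; gsimpl.
rewrite -(@antT_crsT q _ (r^-1)%g); try by rewrite /s; gsimpl.
rewrite !crsT_comp; try by rewrite /s /A; gsimpl.
by rewrite (_ : q * p^-1 * q^-1 = p'^-1)%g //; gsimpl.
Qed.

End Conjugation.

End CrossedWHQ.

Theorem proposition4p6 (k : fieldType) (G : groupType) (H : cgdata k G) :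
  is_crossed_cgwhq H ->
  (forall p : G, bijective (@ant k G H p)) ->
  forall (p q : G) (V : lmodType k) (act : V -> Hc H p -> V)
         (rho : forall r : G, V -> seq (V * Hc H r)),
    is_YDWQ H p V act rho ->
    is_YDWQ H (q * p * q^-1)%g V (conj_act q act) (conj_coact q rho).
Proof.
move=> [HW HX] _ p q V act rho YD.
split.
- exact: (conj_act_lin HX q YD).
- exact: (conj_coact_lin HX q YD).
- split.
  + exact: (conj_act1 HX q YD).
  + exact: (conj_act_epst HW HX q YD).
  + exact: (conj_act_epss HW HX q YD).
- split.
  + exact: (conj_coact_coassoc HX q YD).
  + exact: (conj_coact_counit HX q YD).
- split.
  + exact: (conj_coact_act HW HX YD).
  + exact: (conj_coact_mulAl HX q YD).
  + exact: (conj_coact_mulAr HX q YD).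
Qed.
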